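(* For every instance $(A,C,k)$, every committee $W$ that the Greedy Justified Candidate Rule (GJCR) can output (under any tie-breaking), and every AV-completion $\overline{W}$ of $W$, the utilitarian ratio of $\overline{W}$ is at least $\frac{2}{\sqrt{k}}-\frac1k$.
   Context: An instance $(A,C,k)$ consists of a finite nonempty candidate set $C$, voters $N=\{1,\dots,n\}$, approval sets $A_i\subseteq C$, and a committee size $1\le k\le|C|$. $N_c=\{i: c\in A_i\}$. $\mathrm{sw}(W)=\sum_i|A_i\cap W|$; the utilitarian ratio of a committee $W$ ($|W|\le k$) is $\mathrm{sw}(W)/\max\{\mathrm{sw}(W'):|W'|=k\}$. GJCR starts with $W=\emptyset$ and repeatedly does the following: if there exist $c\in C\setminus W$, $\ell\in\{1,\dots,k\}$ and $N'\subseteq N_c$ with $|N'|\ge\ell n/k$ and $|A_i\cap W|<\ell$ for all $i\in N'$, it picks such a triple with $|N'|$ maximum (ties broken arbitrarily) and adds $c$ to $W$; otherwise it terminates and outputs $W$. An AV-completion of $W$ is $W\cup T$ with $T\subseteq C\setminus W$, $|T|=k-|W|$, maximizing $\sum_{c\in T}|N_c|$. *)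

From mathcomp Require Import all_boot all_order all_algebra.
Set Implicit Arguments. Unset Strict Implicit. Unset Printing Implicit Defensive.
Import Order.TTheory GRing.Theory Num.Theory.

Section Elections.
Variables (C V : finType) (A : V -> {set C}) (k : nat).

Definition supporters (c : C) : {set V} := [set i | c \in A i].

Definition sw (W : {set C}) : nat := \sum_(i : V) #|A i :&: W|.

Definition opt_sw : nat := \max_(W' : {set C} | #|W'| == k) sw W'.

Definition util_ratio (R : rcfType) (W : {set C}) : R :=
  ((sw W)%:R / (opt_sw)%:R)%R.

(* (c, l, N') is a valid GJCR triple w.r.t. the current committee W:
   c ∉ W, 1 <= l <= k, N' ⊆ N_c, |N'| >= l n / k (i.e. |N'| k >= l n),
   and |A_i ∩ W| < l for every i ∈ N'. *)
Definition gjcr_triple (W : {set C}) (c : C) (l : nat) (N' : {set V}) : Prop :=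
  [/\ c \notin W, 1 <= l <= k, N' \subset supporters c,
      #|N'| * k >= l * #|V| & forall i, i \in N' -> #|A i :&: W| < l].

Definition gjcr_step (W W' : {set C}) : Prop :=
  exists c l (N' : {set V}),
    [/\ gjcr_triple W c l N',
        (forall c2 l2 (N2 : {set V}), gjcr_triple W c2 l2 N2 -> #|N2| <= #|N'|)
      & W' = c |: W].

(* committees reachable by GJCR from the empty committee (any tie-breaking) *)
Inductive gjcr_reachable : {set C} -> Prop :=
| gjcr_start : gjcr_reachable set0
| gjcr_next W W' : gjcr_reachable W -> gjcr_step W W' -> gjcr_reachable W'.

Definition gjcr_output (W : {set C}) : Prop :=
  gjcr_reachable W /\ (forall c l (N' : {set V}), ~ gjcr_triple W c l N').

Definition av_completion (W Wbar : {set C}) : Prop :=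
  exists T : {set C},
    [/\ T \subset ~: W, #|T| = k - #|W|, Wbar = W :|: T &
        forall T' : {set C}, T' \subset ~: W -> #|T'| = k - #|W| ->
          \sum_(c in T') #|supporters c| <= \sum_(c in T) #|supporters c|].

End Elections.

From mathcomp Require Import all_boot all_order all_algebra.
From mathcomp Require Import ring lra zify.
Import Order.TTheory GRing.Theory Num.Theory.
Set Implicit Arguments. Unset Strict Implicit. Unset Printing Implicit Defensive.

(* Let a_c = |N_c|, n = |N|, and let Y be the largest score a_c of a candidate outside
   Wbar.  The completion only adds candidates of score >= Y, and GJCR only elects
   candidates with a_c k >= n.  If Y k >= n, a candidate c of score Y outside W makes
   (c, m, N_c) a valid triple as long as fewer than m <= Y k / n candidates are
   elected, so the first such steps of GJCR use groups of size >= Y.  A payment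
   argument (each step costs one unit, shared equally by its group; no voter pays more
   than k/n, and a voter in a group of size >= Y pays strictly less when there are
   few such steps) shows that GJCR then stops before k, which leaves room in the
   completion.  Hence Wbar contains b candidates of score >= Y with b >= k or
   b n >= Y k.  By AM-GM the truncated scores min(a_c, Y) then sum to at least
   (2 sqrt k - 1) Y over Wbar, and comparing with an optimal committee, whose members
   outside Wbar score at most Y, gives the ratio (2 sqrt k - 1) / k. *)

Lemma ler_natdiv (R : numFieldType) (p q u v : nat) : 0 < q -> 0 < v ->
  p * v <= u * q -> (p%:R / q%:R <= u%:R / v%:R :> R)%R.
Proof.
move=> q0 v0 h; rewrite ler_pdivrMr ?ltr0n // mulrAC ler_pdivlMr ?ltr0n //.
by rewrite -!natrM ler_nat.
Qed.

Lemma ltr_natdiv (R : numFieldType) (p q u v : nat) : 0 < q -> 0 < v ->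
  p * v < u * q -> (p%:R / q%:R < u%:R / v%:R :> R)%R.
Proof.
move=> q0 v0 h; rewrite ltr_pdivrMr ?ltr0n // mulrAC ltr_pdivlMr ?ltr0n //.
by rewrite -!natrM ltr_nat.
Qed.

Lemma bigmax_gt0_attained (I : finType) (P : pred I) (F : I -> nat) :
  0 < \max_(i | P i) F i -> exists2 i, P i & \max_(i | P i) F i = F i.
Proof.
case: (pickP P) => [i Pi _ | P0]; last by rewrite big_pred0.
exists [arg max_(j > i | P j) F j]; last exact: bigmax_eq_arg.
by case: arg_maxnP.
Qed.

Lemma card_disjoint_setU (T : finType) (W X : {set T}) :
  X \subset ~: W -> #|W :|: X| = #|W| + #|X|.
Proof. by move=> XW; apply/eqP; rewrite (leq_card_setU W X).2 disjoint_sym disjoints_subset. Qed.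

Section SqrtBounds.
Variable R : rcfType.
Local Open Scope ring_scope.

Lemma two_sqrt_sub1_le (x : R) : 0 <= x -> 2 * Num.sqrt x - 1 <= x.
Proof.
move=> x0; have sx : Num.sqrt x * Num.sqrt x = x by rewrite -expr2 sqr_sqrtr.
have := sqr_ge0 (Num.sqrt x - 1); rewrite expr2; nra.
Qed.

Lemma two_sqrt_sub1_bounds (x : R) : 1 <= x -> 0 <= 2 * Num.sqrt x - 1 <= x.
Proof.
move=> x1; have x0 : 0 <= x by apply: le_trans x1.
have : 1 <= Num.sqrt x by rewrite -sqrtr1 ler_sqrt.
by rewrite two_sqrt_sub1_le // andbT; lra.
Qed.

Lemma two_div_sqrt_sub_inv (x : R) : 0 < x -> 2 / Num.sqrt x - 1 / x = (2 * Num.sqrt x - 1) / x.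
Proof.
move=> x0; have s0 : Num.sqrt x != 0 by rewrite gt_eqF // sqrtr_gt0.
set s := Num.sqrt x; have <- : s * s = x by rewrite -expr2 sqr_sqrtr ?ltW.
by field.
Qed.

Lemma amgm_tradeoff (k b n Z : R) : 0 <= k -> 0 < n -> 0 <= Z -> Z <= b * n -> b <= k ->
  (2 * Num.sqrt k - 1) * Z <= b * Z + (k - b) * n.
Proof.
move=> k0 n0 Z0 Zb bk; set s := Num.sqrt k.
have ss : s * s = k by rewrite -expr2 sqr_sqrtr.
have [nZ|Zn] := lerP n Z.
  (* n (RHS - LHS) = (Z - s n)^2 + (b n - Z)(Z - n) *)
  have := sqr_ge0 (Z - s * n); have : 0 <= (b * n - Z) * (Z - n) by rewrite mulr_ge0 ?subr_ge0.
  rewrite expr2 => h1 h2; rewrite -subr_ge0 -(pmulr_rge0 _ n0); nra.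
have := two_sqrt_sub1_le k0; rewrite -/s => hs; nra.
Qed.

Lemma truncated_sum_ge (T : finType) (w : T -> nat) (X : {set T}) (k n Y : nat) :
  (0 < k)%N -> (0 < n)%N -> (k <= #|X|)%N ->
  {in X, forall c, (Y <= w c) || (n <= w c * k)}%N ->
  (k <= #|[set c in X | Y <= w c]| \/ Y * k <= #|[set c in X | Y <= w c]| * n)%N ->
  (2 * Num.sqrt k%:R - 1) * Y%:R <= (\sum_(c in X) minn (w c) Y)%:R :> R.
Proof.
move=> k0 n0 kX hX hb; set P := [set c in X | (Y <= w c)%N].
set M := (\sum_(c in X) _)%N; set b := #|P|; set r := #|X :\: P|.
have XP : X :&: P = P by apply/setIidPr/subsetP => c; rewrite inE => /andP[].
have kbr : (k <= b + r)%N by rewrite /b /r -{1}XP cardsID.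
have hM : (b * k * Y + r * n <= k * M)%N.
  rewrite /M (big_setID P) /= XP mulnDr; apply: leq_add.
    rewrite (eq_bigr (fun=> Y)) => [|c]; last by rewrite inE => /andP[_ /minn_idPr].
    by rewrite sum_nat_const -/b mulnCA mulnA.
  rewrite big_distrr /= -sum_nat_const leq_sum // => c; rewrite !inE => /andP[cP cX].
  move: (hX c cX); rewrite cX /= in cP; rewrite (negbTE cP) /= => h.
  by rewrite (minn_idPl (ltnW _)) 1?mulnC // ltnNge.
have kR : 0 < k%:R :> R by rewrite ltr0n.
rewrite -(ler_pM2l kR); apply: le_trans (_ : (b * k * Y + r * n)%:R <= _).
  2: by rewrite -natrM ler_nat.
have hs := two_sqrt_sub1_le (ler0n R k).
have [kb|bk] := leqP k b.
  have : (k * k * Y + 0 <= b * k * Y + r * n)%N by rewrite leq_add // !leq_mul2r kb !orbT.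
  rewrite -(ler_nat R) !natrD !natrM => h; apply: le_trans h; rewrite addr0.
  rewrite mulrA [_ * (2 * _ - 1)]mulrC ler_wpM2r // ler_wpM2r //; lra.
have {hb}Yb : (Y * k <= b * n)%N by case: hb; rewrite // leqNgt bk.
have hr : (k%:R - b%:R) * n%:R <= r%:R * n%:R :> R.
  by rewrite ler_wpM2r // lerBlDl -natrD ler_nat.
have nR : 0 < n%:R :> R by rewrite ltr0n.
have YbR : (Y * k)%:R <= b%:R * n%:R :> R by rewrite -natrM ler_nat.
have bkR : b%:R <= k%:R :> R by rewrite ler_nat ltnW.
have := amgm_tradeoff (ler0n R k) nR (ler0n R (Y * k)) YbR bkR.
rewrite !natrD !natrM; lra.
Qed.

End SqrtBounds.

Lemma truncated_sum_ratio (R : realFieldType) (T : finType) (w : T -> nat) (X Z : {set T})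
    (k Y : nat) (g : R) :
  #|Z| = k -> (0 <= g <= k%:R)%R -> (forall c, c \notin X -> w c <= Y) ->
  (g * Y%:R <= (\sum_(c in X) minn (w c) Y)%:R)%R ->
  (g * (\sum_(c in Z) w c)%:R <= k%:R * (\sum_(c in X) w c)%:R)%R.
Proof.
move=> Zk /andP[g0 gk] hout hM.
rewrite (big_setID X) [S in (_ <= _ * S%:R)%R](big_setID Z) /= setIC.
rewrite (big_setID Z) /= in hM; set I := X :&: Z in hM *.
have hD : \sum_(c in Z :\: X) w c <= #|Z :\: X| * Y.
  by rewrite -sum_nat_const leq_sum // => c; rewrite inE => /andP[/hout].
have hQ : \sum_(c in X :\: Z) minn (w c) Y <= \sum_(c in X :\: Z) w c.
  by apply: leq_sum => c _; apply: geq_minl.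
have hI : (k%:R * (\sum_(c in I) minn (w c) Y)%:R <=
    (k%:R - g) * (\sum_(c in I) w c)%:R + g * (#|I|%:R * Y%:R))%R.
  rewrite [(#|I|%:R * _)%R]mulr_natl -sumr_const !natr_sum !mulr_sumr -big_split /=.
  apply: ler_sum => c _; have [wY|Yw] := leqP (w c) Y.
    by move: wY; rewrite -(ler_nat R); nra.
  by move: (ltnW Yw); rewrite -(ler_nat R); nra.
have hc : (#|I|%:R + #|Z :\: X|%:R = k%:R :> R)%R by rewrite -natrD /I setIC cardsID Zk.
move: hD hQ; rewrite -!(ler_nat R) natrM => hD hQ.
have gD := ler_wpM2l g0 hD; have kQ := ler_wpM2l (ler0n R k) hQ.
have kM := ler_wpM2l (ler0n R k) hM.
have gY : (g * (#|I|%:R * Y%:R) + g * (#|Z :\: X|%:R * Y%:R) = g * (k%:R * Y%:R))%R.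
  by rewrite -mulrDr -mulrDl hc.
rewrite !natrD in kM *; lra.
Qed.

Section Welfare.
Variables (C V : finType) (A : V -> {set C}) (k : nat).

Lemma sw_supporters (X : {set C}) : sw A X = \sum_(c in X) #|supporters A c|.
Proof.
have cardE i : #|A i :&: X| = \sum_(c in X) (c \in A i : nat).
  rewrite -sum1_card big_mkcond [RHS]big_mkcond /=.
  by apply: eq_bigr => c _; rewrite !inE; case: (c \in X); case: (c \in A i).
rewrite /sw (eq_bigr _ (fun i _ => cardE i)) exchange_big /=.
apply: eq_bigr => c _; rewrite -sum1_card [RHS]big_mkcond /=.
by apply: eq_bigr => i _; rewrite inE; case: (c \in A i).
Qed.

Lemma sw_gt0_voters (X : {set C}) : 0 < sw A X -> 0 < #|V|.
Proof. by rewrite lt0n sum_nat_eq0 => /forallPn[i _]; apply/card_gt0P; exists i. Qed.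

Lemma opt_sw_attained :
  0 < opt_sw A k -> exists2 Ws : {set C}, #|Ws| = k & opt_sw A k = sw A Ws.
Proof.
move=> opt0; have [W0 W0k | none] := pickP (fun W : {set C} => #|W| == k); last first.
  by move: opt0; rewrite /opt_sw big_pred0.
exists [arg max_(W > W0 | #|W| == k) sw A W]; last exact: bigmax_eq_arg.
by case: arg_maxnP => // W /eqP.
Qed.

Lemma av_completion_exchange (W T : {set C}) t c :
  T \subset ~: W -> #|T| = k - #|W| ->
  (forall T' : {set C}, T' \subset ~: W -> #|T'| = k - #|W| ->
    \sum_(c in T') #|supporters A c| <= \sum_(c in T) #|supporters A c|) ->
  t \in T -> c \notin W :|: T -> #|supporters A c| <= #|supporters A t|.
Proof.
move=> TW Tc Tmax tT; rewrite in_setU negb_or => /andP[cW cT].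
have cT' : c \notin T :\ t by rewrite inE negb_and cT orbT.
have := Tmax (c |: T :\ t).
rewrite (big_setU1 _ cT') [X in _ <= X](big_setD1 _ tT) /= leq_add2r; apply.
  by rewrite subUset sub1set inE cW (subset_trans (subsetDl _ _) TW).
by rewrite cardsU1 cT' -Tc (cardsD1 t T) tT.
Qed.

End Welfare.

Section Trace.
Variables (C V : finType) (A : V -> {set C}) (k : nat).
Local Notation a c := #|supporters A c|.
Local Notation n := #|V|.
Local Notation step := (C * {set V})%type.

(* A run of GJCR, most recent step first; a step records the elected candidate and
   the voter group N' of the triple that elected it. *)
Fixpoint committee (s : seq step) : {set C} :=
  if s is x :: s' then x.1 |: committee s' else set0.

Fixpoint gjcr_trace (s : seq step) : Prop :=
  if s is x :: s' then
    [/\ gjcr_trace s', exists l, gjcr_triple A k (committee s') x.1 l x.2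
      & forall c l N, gjcr_triple A k (committee s') c l N -> #|N| <= #|x.2|]
  else True.

Lemma reachable_trace W :
  gjcr_reachable A k W -> exists2 s, gjcr_trace s & committee s = W.
Proof.
elim=> [|_ _ _ [s trs <-] [c [l [N [tr maxN ->]]]]]; first by exists [::].
by exists ((c, N) :: s); last by []; split=> //; exists l.
Qed.

Lemma card_committee s : gjcr_trace s -> #|committee s| = size s.
Proof.
elim: s => [|x s IH] /=; first by rewrite cards0.
by case=> trs [l [xW _ _ _ _]] _; rewrite cardsU1 xW IH.
Qed.

Lemma gjcr_triple_subset (W1 W2 : {set C}) c l (N : {set V}) :
  W1 \subset W2 -> gjcr_triple A k W2 c l N -> gjcr_triple A k W1 c l N.
Proof.
move=> W12 [cW lk Nc hN hu]; split=> //; first by apply: contra cW; apply: subsetP.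
by move=> i /hu; apply/leq_ltn_trans/subset_leq_card/setIS.
Qed.

Lemma trace_head_group_min x s :
  gjcr_trace (x :: s) -> all (fun y : step => #|x.2| <= #|y.2|) (x :: s).
Proof.
elim: s x => [|y s IH] x; first by rewrite /= leqnn.
case=> -[trs ys maxy] [l xs] _; rewrite /= leqnn /=.
have xy : #|x.2| <= #|y.2| by apply/maxy/(gjcr_triple_subset _ xs)/subsetUr.
by apply: (sub_all _ (IH y (And3 trs ys maxy))) => z; apply: leq_trans.
Qed.

Lemma trace_group_gt0 s : 0 < n -> gjcr_trace s -> all (fun x : step => 0 < #|x.2|) s.
Proof.
move=> n0; elim: s => [//|x s IH] [trs [l [_ /andP[l1 _] _ hN _]] _] /=.
rewrite IH // andbT; move: (leq_trans (leq_mul l1 n0) hN).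
by rewrite muln_gt0 => /andP[].
Qed.

Lemma committee_support s c : gjcr_trace s -> c \in committee s -> n <= a c * k.
Proof.
elim: s => [|x s IH] /=; first by rewrite inE.
case=> trs [l [_ /andP[l1 _] Nc hN _]] _; rewrite in_setU1 => /orP[/eqP->|]; last exact: IH.
apply: leq_trans (leq_trans _ hN) _; first by rewrite leq_pmull.
by rewrite leq_mul2r subset_leq_card ?orbT.
Qed.

Definition group_count (i : V) (s : seq step) := count (fun x : step => i \in x.2) s.

Definition big_steps (Y : nat) (s : seq step) := count (fun x : step => Y <= #|x.2|) s.

Lemma group_count_le i s : gjcr_trace s -> group_count i s <= #|A i :&: committee s|.
Proof.
elim: s => [|[c N] s IH] //= [trs [l [cW _ Nc _ _]] _]; rewrite /group_count /= in IH *.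
case iN: (i \in N) => /=; last first.
  by apply: leq_trans (IH trs) _; apply/subset_leq_card/setIS/subsetUr.
have cAi : c \in A i by move: (subsetP Nc i iN); rewrite inE.
rewrite setIUr (setIidPr _) ?sub1set // cardsU1 inE (negbTE cW) andbF.
by rewrite add1n ltnS IH.
Qed.

Lemma group_count_head x s i :
  gjcr_trace (x :: s) -> i \in x.2 -> group_count i (x :: s) * n <= k * #|x.2|.
Proof.
move=> [trs [l [_ _ _ hN hu]] _] ix; rewrite [k * _]mulnC (leq_trans _ hN) // leq_mul2r.
by rewrite /group_count /= ix add1n (leq_ltn_trans (group_count_le i trs)) ?hu ?orbT.
Qed.

Lemma group_count_le_big_steps Y i s :
  all (fun x : step => Y <= #|x.2|) s -> group_count i s <= big_steps Y s.
Proof.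
move=> allY; rewrite /group_count -[s in count _ s](all_filterP allY) count_filter.
by apply: sub_count => x /andP[].
Qed.

Section Payments.
Hypothesis n_gt0 : (0 < n)%N.
Local Open Scope ring_scope.

Definition payment (i : V) (s : seq step) : rat := \sum_(x <- s | i \in x.2) #|x.2|%:R^-1.

Lemma group_count_sum i s (g : nat) :
  (group_count i s)%:R / g%:R = \sum_(x <- s | i \in x.2) g%:R^-1 :> rat.
Proof.
rewrite /group_count -sum1_count natr_sum mulr_suml.
by under eq_bigr do rewrite mul1r.
Qed.

Lemma payment_le_group_count i s (g : nat) : (0 < g)%N ->
  all (fun x : step => g <= #|x.2|)%N s -> payment i s <= (group_count i s)%:R / g%:R.
Proof.
move=> g0 allg; rewrite group_count_sum /payment big_seq_cond [X in _ <= X]big_seq_cond.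
apply: ler_sum => x /andP[xs _]; have gx := allP allg x xs.
by rewrite lef_pV2 ?posrE ?ltr0n ?ler_nat // (leq_trans g0 gx).
Qed.

Lemma payment_lt_group_count i s (g Y : nat) : (0 < g)%N -> (g < Y)%N ->
  all (fun x : step => g <= #|x.2|)%N s ->
  has (fun x : step => (i \in x.2) && (Y <= #|x.2|)%N) s ->
  payment i s < (group_count i s)%:R / g%:R.
Proof.
move=> g0 gY allg hasY; rewrite group_count_sum /payment.
rewrite (bigID (fun x : step => Y <= #|x.2|)%N) [X in _ < X](bigID (fun x : step => Y <= #|x.2|)%N).
apply: ltr_leD.
  apply: ltr_sum => // x /andP[_ Yx]; have gx := leq_trans gY Yx.
  by rewrite ltf_pV2 ?posrE ?ltr0n ?ltr_nat // (ltn_trans g0 gx).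
rewrite big_seq_cond [X in _ <= X]big_seq_cond.
apply: ler_sum => x /andP[xs _]; have gx := allP allg x xs.
by rewrite lef_pV2 ?posrE ?ltr0n ?ler_nat // (leq_trans g0 gx).
Qed.

Lemma payment_cons_out i (x : step) s : i \notin x.2 -> payment i (x :: s) = payment i s.
Proof. by move=> ix; rewrite /payment big_cons (negbTE ix). Qed.

Lemma payment_le_quota i (s : seq step) : gjcr_trace s -> payment i s <= k%:R / n%:R.
Proof.
elim: s => [|x s IH] trs; first by rewrite /payment big_nil divr_ge0.
have [ix|ix] := boolP (i \in x.2); last by rewrite payment_cons_out //; apply: IH; case: trs.
have g0 : (0 < #|x.2|)%N by have /andP[] := trace_group_gt0 n_gt0 trs.
apply: le_trans (payment_le_group_count i g0 (trace_head_group_min trs)) _.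
exact: ler_natdiv (group_count_head trs ix).
Qed.

Lemma payment_lt_quota Y i (s : seq step) : gjcr_trace s -> (big_steps Y s * n < Y * k)%N ->
  has (fun x : step => (i \in x.2) && (Y <= #|x.2|)%N) s -> payment i s < k%:R / n%:R.
Proof.
elim: s => [//|x s IH] trs hB.
have [ix|ix] := boolP (i \in x.2); last first.
  rewrite /= (negbTE ix) payment_cons_out //; case: trs => trs _ _; apply: IH => //.
  by apply: leq_ltn_trans hB; rewrite leq_mul2r leq_addl orbT.
move=> hasY; set g := #|x.2|; have gmin := trace_head_group_min trs.
have g0 : (0 < g)%N by have /andP[] := trace_group_gt0 n_gt0 trs.
have [Yg|gY] := leqP Y g; last first.
  apply: lt_le_trans (payment_lt_group_count g0 gY gmin hasY) _.
  exact: ler_natdiv (group_count_head trs ix).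
apply: le_lt_trans (payment_le_group_count i g0 gmin) _.
apply: ltr_natdiv => //; apply: leq_ltn_trans (leq_mul _ (leqnn _)) _.
  by apply/group_count_le_big_steps/(sub_all _ gmin) => y; apply: leq_trans Yg.
by apply: leq_trans hB _; rewrite mulnC leq_mul2l Yg orbT.
Qed.

Lemma sum_payment (s : seq step) : gjcr_trace s -> \sum_(i : V) payment i s = (size s)%:R.
Proof.
move=> trs; rewrite /payment; under eq_bigr do rewrite big_mkcond.
rewrite exchange_big /= -sum1_size natr_sum big_seq [RHS]big_seq; apply: eq_bigr => x xs.
have x0 : (0 < #|x.2|)%N by apply: (allP (trace_group_gt0 n_gt0 trs)).
by rewrite -big_mkcond sumr_const -[_ *+ _]mulr_natr mulVf ?pnatr_eq0 -?lt0n.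
Qed.

Lemma trace_size_lt Y (s : seq step) : gjcr_trace s -> (big_steps Y s * n < Y * k)%N ->
  (0 < big_steps Y s)%N -> (size s < k)%N.
Proof.
move=> trs hB; rewrite -has_count => /hasP[x xs Yx].
have [i ix] : exists i, i \in x.2.
  by apply/set0Pn; rewrite -card_gt0; apply: (allP (trace_group_gt0 n_gt0 trs)).
have hasY : has (fun x : step => (i \in x.2) && (Y <= #|x.2|)%N) s.
  by apply/hasP; exists x; rewrite ?ix.
rewrite -(ltr_nat rat) -sum_payment //.
have -> : k%:R = \sum_(j : V) (k%:R / n%:R) :> rat.
  by rewrite sumr_const -[RHS]mulr_natr divfK // pnatr_eq0 -lt0n.
rewrite (bigD1 i) //= [X in _ < X](bigD1 i) //=.
apply: ltr_leD; first exact: payment_lt_quota trs hB hasY.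
by apply: ler_sum => j _; apply: payment_le_quota.
Qed.

End Payments.

Lemma supporters_triple (W : {set C}) c m : c \notin W -> #|W| < m -> m <= k ->
  m * n <= a c * k -> gjcr_triple A k W c m (supporters A c).
Proof.
move=> cW Wm mk hm; split=> //; first by rewrite mk (leq_ltn_trans _ Wm).
by move=> i _; apply: leq_ltn_trans Wm; apply/subset_leq_card/subsetIr.
Qed.

Lemma big_steps_ge s c m : gjcr_trace s -> c \notin committee s ->
  m <= size s -> m <= k -> m * n <= a c * k -> m <= big_steps (a c) s.
Proof.
elim: s m => [|x s IH] m /=; first by rewrite leqn0 => _ _ /eqP->.
case=> trs _ maxx; rewrite in_setU1 negb_or => /andP[_ cs].
rewrite leq_eqVlt ltnS => /orP[/eqP-> | ms] mk hm; last first.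
  by apply: leq_trans (IH m trs cs ms mk hm) (leq_addl _ _).
have hc := supporters_triple cs _ mk hm; rewrite (card_committee trs) ltnSn in hc.
rewrite (maxx _ _ _ (hc isT)) add1n ltnS; apply: IH => //; first exact: ltnW.
by apply: leq_trans _ hm; rewrite leq_mul2r leqnSn orbT.
Qed.

Lemma big_steps_le_card Y s : gjcr_trace s ->
  big_steps Y s <= #|[set c in committee s | Y <= a c]|.
Proof.
elim: s => [|[c N] s IH] /=; first by rewrite /big_steps /= leq0n.
case=> trs [l [cW _ Nc _ _]] _; rewrite /big_steps /= -/(big_steps Y s).
have sub : [set x in committee s | Y <= a x] \subset [set x in c |: committee s | Y <= a x].
  by apply/subsetP => x; rewrite !inE => /andP[-> ->]; rewrite orbT.
have [YN|NY] := boolP (Y <= #|N|); last first.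
  by rewrite add0n (leq_trans (IH trs) (subset_leq_card sub)).
have Yc : Y <= a c by apply: leq_trans YN (subset_leq_card Nc).
apply: (@leq_trans #|c |: [set x in committee s | Y <= a x]|).
  by rewrite cardsU1 inE (negbTE cW) !add1n ltnS IH.
by apply/subset_leq_card; rewrite subUset sub1set inE setU11 Yc sub.
Qed.

Lemma completion_support s (T : {set C}) Y c : gjcr_trace s -> {in T, forall t, Y <= a t} ->
  c \in committee s :|: T -> (Y <= a c) || (n <= a c * k).
Proof.
by move=> trs YT; rewrite inE => /orP[/(committee_support trs)-> | /YT->]; rewrite ?orbT.
Qed.

Lemma completion_high_card s (T : {set C}) Y : 0 < n -> gjcr_trace s ->
  (forall c l N, ~ gjcr_triple A k (committee s) c l N) ->
  T \subset ~: committee s -> #|T| = k - #|committee s| -> {in T, forall t, Y <= a t} ->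
  (0 < Y -> exists2 c0, c0 \notin committee s & Y <= a c0) ->
  k <= #|[set c in committee s :|: T | Y <= a c]| \/
  Y * k <= #|[set c in committee s :|: T | Y <= a c]| * n.
Proof.
move=> n0 trs term TW Tc YT hc0; set W := committee s; set b := #|_|.
have [Yn|nY] := ltnP (Y * k) n.
  left; suff -> : b = #|W :|: T| by rewrite card_disjoint_setU // Tc -/W; lia.
  apply: eq_card => c; rewrite inE; case cX: (c \in W :|: T) => //=.
  case/orP: (completion_support trs YT cX) => // /(leq_trans Yn).
  by rewrite ltn_mul2r => /andP[_ /ltnW].
have [c0 c0W Yc0] : exists2 c0, c0 \notin W & Y <= a c0.
  by apply: hc0; move: (leq_trans n0 nY); rewrite muln_gt0 => /andP[].
set B := big_steps Y s.
(* (c0, m, N_c0) stays a valid triple while fewer than m candidates are elected. *)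
have hfirst m : m <= k -> m * n <= Y * k -> m <= B.
  move=> mk hm; have hm0 : m * n <= a c0 * k by rewrite (leq_trans hm) // leq_mul2r Yc0 orbT.
  have ms : m <= size s.
    rewrite leqNgt; apply/negP => sm; apply: (term c0 m (supporters A c0)).
    by apply: supporters_triple; rewrite ?card_committee.
  apply: leq_trans (big_steps_ge trs c0W ms mk hm0) _.
  by apply: sub_count => x; apply: leq_trans.
have hBb : B + (k - #|W|) <= b.
  rewrite -Tc (leq_trans (leq_add (big_steps_le_card Y trs) (leqnn _))) //.
  rewrite -card_disjoint_setU; last first.
    by apply: subset_trans TW _; rewrite setCS; apply/subsetP => c; rewrite inE => /andP[].
  apply/subset_leq_card/subsetP => c; rewrite !inE => /orP[/andP[-> ->] // | cT].
  by rewrite cT YT ?orbT.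
have [kB|Bk] := leqP k B; first by left; apply: leq_trans kB (leq_trans (leq_addr _ _) hBb).
have [YB|BY] := leqP (Y * k) (B * n).
  by right; rewrite (leq_trans YB) // leq_mul2r (leq_trans (leq_addr _ _) hBb) orbT.
have Wk : #|W| < k.
  rewrite card_committee //; apply: (trace_size_lt n0 trs BY).
  by apply: hfirst; rewrite ?mul1n // (leq_ltn_trans (leq0n B) Bk).
have hB1 : Y * k < B.+1 * n by rewrite ltnNge; apply/negP => /(hfirst _ Bk); rewrite ltnn.
right; rewrite (leq_trans (ltnW hB1)) // leq_mul2r (leq_trans _ hBb) ?orbT //; lia.
Qed.

End Trace.

Local Open Scope ring_scope.
Unset Implicit Arguments.

Theorem theorem3 (R : rcfType) (C V : finType) (A : V -> {set C}) (k : nat)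
  (W Wbar : {set C}) :
  (1 <= k)%N -> (k <= #|C|)%N ->
  gjcr_output A k W ->
  av_completion A k W Wbar ->
  (0 < opt_sw A k)%N ->
  2 / Num.sqrt (k%:R) - 1 / k%:R <= util_ratio A k R Wbar.
Proof.
(* The hypothesis k <= #|C| is implied by 0 < opt_sw A k. *)
move=> k0 _ [reach term] [T [TW Tc -> Tmax]] opt0.
have [Ws Wsk optE] := opt_sw_attained opt0.
have n0 : (0 < #|V|)%N by apply: (@sw_gt0_voters _ _ A Ws); rewrite -optE.
have [s trs eW] := reachable_trace reach; subst W.
set Y := (\max_(c | c \notin committee s :|: T) #|supporters A c|)%N.
have Ymax c : c \notin committee s :|: T -> (#|supporters A c| <= Y)%N.
  by move=> cX; apply: (@leq_bigmax_cond _ (fun c => c \notin committee s :|: T)).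
have YT : {in T, forall t, Y <= #|supporters A t|}%N.
  by move=> t tT; apply/bigmax_leqP => c; exact: av_completion_exchange TW Tc Tmax tT.
have Ywit : (0 < Y)%N -> exists2 c0, c0 \notin committee s & (Y <= #|supporters A c0|)%N.
  case/bigmax_gt0_attained => c0; rewrite in_setU negb_or => /andP[c0W _] Yc0.
  by exists c0; rewrite // /Y Yc0.
have hb := completion_high_card n0 trs term TW Tc YT Ywit.
have kX : (k <= #|committee s :|: T|)%N by rewrite card_disjoint_setU // Tc; lia.
have hM := truncated_sum_ge R k0 n0 kX (fun c => completion_support trs YT) hb.
have k1 : 1 <= k%:R :> R by rewrite ler1n.
have := truncated_sum_ratio Wsk (two_sqrt_sub1_bounds k1) Ymax hM.
rewrite -!sw_supporters -optE /util_ratio two_div_sqrt_sub_inv ?(lt_le_trans ltr01 k1) //.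
rewrite ler_pdivrMr ?ltr0n // mulrAC ler_pdivlMr ?ltr0n // => ratio.
by apply: le_trans ratio _; rewrite mulrC.
Qed.
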